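(* Let $q\in\mathbb{C}^\times$ be not a root of unity, $\varphi\in\mathbb{C}[x]^{\langle0\rangle}$, and let $v_0$ be a highest weight vector of the $U_q(\mathfrak{sl}_2^{\langle0\rangle}[x])$-module $L(\mathbf{u}^{\langle0\rangle}(\varphi))$. Then, as formal power series in $w$, $$\Psi^+(w)\cdot v_0=\beta_\varphi q^{\deg\varphi}\frac{\varphi^\flat(q^{-2}w)}{\varphi^\flat(w)}v_0.$$
   Context: $[k]=(q^k-q^{-k})/(q-q^{-1})$, $[x,y]=xy-yx$. $U_q(\mathfrak{sl}_2^{\langle0\rangle}[x])$ is the $\mathbb{C}$-algebra with generators $X^\pm_t,J_t$ ($t\ge0$), $K^\pm$ and relations: $K^+$ and all $J_t$ pairwise commute; $K^+K^-=1=K^-K^+$; $(K^-)^2=1-(q-q^{-1})J_0$; $X^\pm_{t+1}X^\pm_s-q^{\pm2}X^\pm_sX^\pm_{t+1}=q^{\pm2}X^\pm_tX^\pm_{s+1}-X^\pm_{s+1}X^\pm_t$; $K^+X^\pm_tK^-=q^{\pm2}X^\pm_t$; $q^{\pm2}J_0X^\pm_t-q^{\mp2}X^\pm_tJ_0=\pm[2]X^\pm_t$; $[J_{s+1},X^\pm_t]=q^{\pm2}J_sX^\pm_{t+1}-q^{\mp2}X^\pm_{t+1}J_s$; $[X^+_t,X^-_s]=K^+J_{s+t}$. $\Psi^+_0=K^+$, $\Psi^+_t=(q-q^{-1})K^+J_t$ ($t>0$), $\Psi^+(w)=\sum_{t\ge0}\Psi^+_tw^t$. $L(\mathbf{u})$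 for $\mathbf{u}=(\lambda,(u_t)_{t>0})$ is the simple module generated by $v_0$ with $X^+_tv_0=0$, $K^+v_0=\lambda v_0$, $J_tv_0=u_tv_0$ ($t>0$). $p_t(q)(x_1,\dots,x_k)=\sum_{\lambda\vdash t,\ell(\lambda)\le k}q^{-\ell(\lambda)}(q-q^{-1})^{\ell(\lambda)-1}m_\lambda(x_1,\dots,x_k)$. $\mathbb{C}[x]^{\langle0\rangle}$ is the set of $\varphi=\beta_\varphi(x-\gamma_1)\cdots(x-\gamma_k)$ with $\beta_\varphi=\pm1$; $\mathbf{u}^{\langle0\rangle}(\varphi)=(\beta_\varphi,(0)_{t>0})$ if $k=0$, $(\beta_\varphi q^k,(p_t(q)(\gamma_1,\dots,\gamma_k))_{t>0})$ if $k>0$. $\varphi^\flat(w)=(1-\gamma_1w)\cdots(1-\gamma_kw)$. *)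

From HB Require Import structures.
From mathcomp Require Import all_boot all_order all_algebra.
From mathcomp Require Import complex.
From mathcomp Require Import reals.
Set Implicit Arguments. Unset Strict Implicit. Unset Printing Implicit Defensive.
Import Order.TTheory GRing.Theory Num.Theory.
Local Open Scope ring_scope.

Section Defs.
Variable C : fieldType.

Definition qint (q : C) (k : nat) : C := (q ^+ k - q ^- k) / (q - q^-1).

Variable V : lmodType C.

(* (Xp, Xm, J, Kp, Km) define a U_q(sl_2^<0>[x])-module structure on V:
   Xp t = X^+_t, Xm t = X^-_t, J t = J_t, Kp = K^+, Km = K^-. *)
Definition is_Uq_module (q : C) (Xp Xm J : nat -> {linear V -> V})
    (Kp Km : {linear V -> V}) : Prop :=
  (forall t v, Kp (J t v) = J t (Kp v)) /\
  (forall s t v, J s (J t v) = J t (J s v)) /\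
  (forall v, Kp (Km v) = v) /\ (forall v, Km (Kp v) = v) /\
  (forall v, Km (Km v) = v - (q - q^-1) *: J 0%N v) /\
  (forall t s v, Xp t.+1 (Xp s v) - q ^+ 2 *: Xp s (Xp t.+1 v)
                 = q ^+ 2 *: Xp t (Xp s.+1 v) - Xp s.+1 (Xp t v)) /\
  (forall t s v, Xm t.+1 (Xm s v) - q ^- 2 *: Xm s (Xm t.+1 v)
                 = q ^- 2 *: Xm t (Xm s.+1 v) - Xm s.+1 (Xm t v)) /\
  (forall t v, Kp (Xp t (Km v)) = q ^+ 2 *: Xp t v) /\
  (forall t v, Kp (Xm t (Km v)) = q ^- 2 *: Xm t v) /\
  (forall t v, q ^+ 2 *: J 0%N (Xp t v) - q ^- 2 *: Xp t (J 0%N v)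
               = qint q 2 *: Xp t v) /\
  (forall t v, q ^- 2 *: J 0%N (Xm t v) - q ^+ 2 *: Xm t (J 0%N v)
               = - (qint q 2 *: Xm t v)) /\
  (forall s t v, J s.+1 (Xp t v) - Xp t (J s.+1 v)
                 = q ^+ 2 *: J s (Xp t.+1 v) - q ^- 2 *: Xp t.+1 (J s v)) /\
  (forall s t v, J s.+1 (Xm t v) - Xm t (J s.+1 v)
                 = q ^- 2 *: J s (Xm t.+1 v) - q ^+ 2 *: Xm t.+1 (J s v)) /\
  (forall t s v, Xp t (Xm s v) - Xm s (Xp t v) = Kp (J (s + t)%N v)).

Definition is_submodule (Xp Xm J : nat -> {linear V -> V})
    (Kp Km : {linear V -> V}) (W : V -> Prop) : Prop :=
  W 0 /\ (forall u v, W u -> W v -> W (u + v)) /\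
  (forall (a : C) v, W v -> W (a *: v)) /\
  (forall t v, W v -> W (Xp t v)) /\ (forall t v, W v -> W (Xm t v)) /\
  (forall t v, W v -> W (J t v)) /\
  (forall v, W v -> W (Kp v)) /\ (forall v, W v -> W (Km v)).

Definition simple_module (Xp Xm J : nat -> {linear V -> V})
    (Kp Km : {linear V -> V}) : Prop :=
  (exists v : V, v != 0) /\
  forall W, is_submodule Xp Xm J Kp Km W ->
    (forall v, W v -> v = 0) \/ (forall v, W v).

Definition Psi_plus (q : C) (Kp : {linear V -> V}) (J : nat -> {linear V -> V})
    (t : nat) (v : V) : V :=
  if t == 0%N then Kp v else (q - q^-1) *: Kp (J t v).

End Defs.

Section Sym.
Variable C : fieldType.

Definition is_partition (lam : seq nat) (t : nat) : bool :=
  [&& sorted geq lam, all (fun i => 0 < i)%N lam & sumn lam == t].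

(* monomial symmetric polynomial m_lam(x_1,...,x_k), xs = [x_1;...;x_k]:
   sum of x^alpha over the distinct rearrangements alpha of lam (padded with 0) *)
Definition mono_sym (lam : seq nat) (xs : seq C) : C :=
  \sum_(a : {ffun 'I_(size xs) -> 'I_(sumn lam).+1} |
          sort geq [seq i <- [seq val (a j) | j <- enum 'I_(size xs)] | (0 < i)%N]
          == lam)
    \prod_(j < size xs) xs`_j ^+ a j.

Definition ppoly (q : C) (t : nat) (xs : seq C) : C :=
  \sum_(l < (size xs).+1)
    \sum_(s : l.-tuple 'I_t.+1 | is_partition (map val s) t)
      q ^- l * (q - q^-1) ^+ l.-1 * mono_sym (map val s) xs.

Definition phi (beta : C) (gs : seq C) : {poly C} :=
  beta *: \prod_(g <- gs) ('X - g%:P).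

Definition uvec (q beta : C) (gs : seq C) : C * (nat -> C) :=
  if gs is [::] then (beta, fun _ => 0)
  else (beta * q ^+ size gs, fun t => ppoly q t gs).

Definition phi_flat (gs : seq C) : {poly C} := \prod_(g <- gs) (1 - g *: 'X).

(* formal power series in w, as coefficient sequences *)
Definition ps_mul (f g : nat -> C) (n : nat) : C :=
  \sum_(i < n.+1) f i * g (n - i)%N.

Fixpoint ps_inv_seq (f : nat -> C) (n : nat) : seq C :=
  match n with
  | 0 => [:: (f 0%N)^-1]
  | n'.+1 => let s := ps_inv_seq f n' in
      rcons s (- (f 0%N)^-1 * \sum_(j < n'.+1) f j.+1 * nth 0 s (n' - j)%N)
  end.

Definition ps_inv (f : nat -> C) (n : nat) : C := nth 0 (ps_inv_seq f n) n.

(* coefficients of beta q^{deg phi} phi^flat(q^-2 w) / phi^flat(w) *)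
Definition rhs_series (q beta : C) (gs : seq C) (n : nat) : C :=
  beta * q ^+ (size (phi beta gs)).-1 *
  ps_mul (fun m => (phi_flat gs)`_m * (q ^- 2) ^+ m)
         (ps_inv (fun m => (phi_flat gs)`_m)) n.

End Sym.

From Pilot Require Import Defs.
From HB Require Import structures.
From mathcomp Require Import all_boot all_order all_algebra.
From mathcomp Require Import complex.
From mathcomp Require Import reals.
From mathcomp Require Import ring.
Set Implicit Arguments. Unset Strict Implicit. Unset Printing Implicit Defensive.
Import Order.TTheory GRing.Theory Num.Theory.
Local Open Scope ring_scope.

(* Only the eigenvalues of K^+ and J_t on v0 enter Psi^+(w) v0.  Since (1 - q^-2 g w) / (1 - g w) = 1 + (1 - q^-2) sum_(m >= 1) g^m w^m,
   the coefficient of w^t (t > 0) in phi^flat(q^-2 w) / phi^flat(w) is the sum,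
   over exponent vectors a with |a| = t, of (1 - q^-2)^(#supp a) g^a.  Grouping
   the vectors a by the partition of their nonzero entries turns this into
   sum_lam (1 - q^-2)^(l(lam)) m_lam(g), and
   (1 - q^-2)^l = (q - q^-1) q^-l (q - q^-1)^(l-1), which is (q - q^-1) p_t(q). *)

Section TruncatedSeries.
Variable F : fieldType.
Implicit Types (p r A B G : {poly F}) (f : nat -> F).

Lemma modXn_eqP n p r :
  (forall m, (m < n)%N -> p`_m = r`_m) <-> p %% 'X^n = r %% 'X^n.
Proof.
rewrite -!Pdiv.IdomainMonic.take_poly_modp; split=> [E | /polyP E m lt_mn].
  by apply/polyP => m; rewrite !coef_take_poly; case: ifP => // /E.
by have := E m; rewrite !coef_take_poly lt_mn.
Qed.

Lemma modp_prod d (I : Type) (s : seq I) (P Q : I -> {poly F}) :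
  (forall i, P i %% d = Q i %% d) ->
  (\prod_(i <- s) P i) %% d = (\prod_(i <- s) Q i) %% d.
Proof.
move=> EPQ; have modpM a b c e :
    a %% d = b %% d -> c %% d = e %% d -> (a * c) %% d = (b * e) %% d.
  move=> Eab Ece; rewrite -modp_mul Ece modp_mul mulrC.
  by rewrite -modp_mul Eab modp_mul mulrC.
by elim/big_rec2: _ => // i x y _; apply: modpM.
Qed.

Lemma size_ps_inv_seq f n : size (ps_inv_seq f n) = n.+1.
Proof. by elim: n => //= n IH; rewrite size_rcons IH. Qed.

Lemma nth_ps_inv_seq f n i : (i <= n)%N -> nth 0 (ps_inv_seq f n) i = ps_inv f i.
Proof.
elim: n => [|n IH]; first by rewrite leqn0 => /eqP ->.
rewrite leq_eqVlt => /predU1P[-> // | lt_in].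
by rewrite /= nth_rcons size_ps_inv_seq lt_in IH.
Qed.

Lemma ps_invS f n :
  ps_inv f n.+1 = - (f 0%N)^-1 * \sum_(j < n.+1) f j.+1 * ps_inv f (n - j).
Proof.
rewrite /ps_inv /= nth_rcons size_ps_inv_seq ltnn eqxx.
by congr (_ * _); apply: eq_bigr => j _; rewrite nth_ps_inv_seq ?leq_subr.
Qed.

Lemma ps_mulV f n : f 0%N != 0 -> ps_mul f (ps_inv f) n = (n == 0)%:R.
Proof.
move=> f0_neq0; case: n => [|n]; first by rewrite /ps_mul big_ord1 mulfV.
rewrite /ps_mul big_ord_recl subn0 ps_invS mulrA mulrN mulfV // mulN1r addrC.
by apply/eqP; rewrite subr_eq0; apply/eqP/eq_bigr => j _; rewrite subSS.
Qed.

Lemma ps_mul_inv_coef A B G n : B`_0 != 0 ->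
  (B * G) %% 'X^(n.+1) = A %% 'X^(n.+1) ->
  ps_mul (nth 0 A) (ps_inv (nth 0 B)) n = G`_n.
Proof.
move=> B0_neq0 EBG; set I := \poly_(i < n.+1) ps_inv (nth 0 B) i.
have coefI i : (i <= n)%N -> I`_i = ps_inv (nth 0 B) i by rewrite coef_poly ltnS => ->.
have EBI : (B * I) %% 'X^(n.+1) = 1 %% 'X^(n.+1).
  apply/modXn_eqP => m lt_mn; rewrite coefM coef1 -(ps_mulV _ B0_neq0).
  by apply: eq_bigr => i _; rewrite coefI // (leq_trans (leq_subr _ _)).
have EAI : (A * I) %% 'X^(n.+1) = G %% 'X^(n.+1).
  rewrite mulrC -modp_mul -EBG modp_mul (_ : I * (B * G) = G * (B * I)); last by ring.
  by rewrite -modp_mul EBI modp_mul mulr1.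
rewrite -(proj2 (modXn_eqP _ _ _) EAI n (ltnSn n)) coefM.
by apply: eq_bigr => i _; rewrite coefI ?leq_subr.
Qed.

End TruncatedSeries.

Section FlatRatio.
Variable F : fieldType.
Implicit Types (s g : F) (gs : seq F) (p : {poly F}).

(* The [m]-th coefficient of the power series (1 - s g w) / (1 - g w). *)
Definition lin_ratio_coef s g (m : nat) : F :=
  if m == 0%N then 1 else (1 - s) * g ^+ m.

Lemma lin_ratio_modXn s g n :
  ((1 - g *: 'X) * \poly_(m < n) lin_ratio_coef s g m) %% 'X^n
  = (1 - (s * g) *: 'X) %% 'X^n.
Proof.
apply/modXn_eqP => m lt_mn.
rewrite mulrBl mul1r -scalerAl coefB coefZ coefXM !coef_poly lt_mn.
rewrite coefB coef1 coefZ coefX /lin_ratio_coef.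
case: m lt_mn => [|[|m]] lt_mn /=; first by rewrite !mulr0 !subr0.
  by rewrite (ltnW lt_mn) expr1 mulr1; ring.
by rewrite (ltnW lt_mn) exprS; ring.
Qed.

Lemma prod_lin_ratio_coef k s (h : 'I_k -> F) (e : 'I_k -> nat) :
  \prod_j lin_ratio_coef s (h j) (e j)
  = (1 - s) ^+ (\sum_j (e j != 0%N)) * \prod_j h j ^+ e j.
Proof.
rewrite -prodrXr -big_split; apply: eq_bigr => j _ /=.
by rewrite /lin_ratio_coef; case: eqP => [-> | _]; rewrite ?expr0 ?mulr1.
Qed.

Lemma coef_comp_polyZX p s m : (p \Po (s *: 'X))`_m = p`_m * s ^+ m.
Proof.
elim/poly_ind: p m => [|p c IHp] m; first by rewrite comp_poly0 !coef0 mul0r.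
rewrite comp_polyD comp_polyM comp_polyX comp_polyC -scalerAr !coefD coefZ.
rewrite !coefMX !coefC; case: m => [|m] /=.
  by rewrite mulr0 expr0 mulr1 !add0r.
by rewrite IHp exprS !addr0; ring.
Qed.

Lemma phi_flat_comp gs s :
  phi_flat gs \Po (s *: 'X) = \prod_(g <- gs) (1 - (s * g) *: 'X).
Proof.
rewrite /phi_flat rmorph_prod; apply: eq_bigr => g _.
by rewrite rmorphB rmorph1 /= comp_polyZ comp_polyX scalerA mulrC.
Qed.

Lemma coef0_phi_flat gs : (phi_flat gs)`_0 = 1.
Proof.
by rewrite coef0_prod big1 // => g _; rewrite coefB coef1 coefZ coefX mulr0 subr0.
Qed.

Lemma phi_flat_ratio_coef gs s n :
  ps_mul (fun m => (phi_flat gs)`_m * s ^+ m) (ps_inv (nth 0 (phi_flat gs))) n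
  = (\prod_(j < size gs) \poly_(m < n.+1) lin_ratio_coef s gs`_j m)`_n.
Proof.
transitivity (ps_mul (nth 0 (phi_flat gs \Po (s *: 'X)))
                     (ps_inv (nth 0 (phi_flat gs))) n).
  by apply: eq_bigr => i _; rewrite coef_comp_polyZX.
apply: ps_mul_inv_coef; first by rewrite coef0_phi_flat oner_neq0.
rewrite phi_flat_comp /phi_flat (big_nth 0) big_mkord (big_nth 0) big_mkord.
by rewrite -big_split; apply: modp_prod => j; apply: lin_ratio_modXn.
Qed.

End FlatRatio.

Lemma coef_prod_poly (R : comNzRingType) k t (h : 'I_k -> nat -> R) :
  (\prod_(j < k) \poly_(m < t.+1) h j m)`_t
  = \sum_(a : {ffun 'I_k -> 'I_t.+1} | (\sum_j a j)%N == t) \prod_j h j (a j).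
Proof.
rewrite (eq_bigr (fun j => \sum_(m < t.+1) (h j m)%:P * 'X^m)); last first.
  by move=> j _; rewrite poly_def; apply: eq_bigr => m _; rewrite mul_polyC.
rewrite bigA_distr_bigA coef_sum [RHS]big_mkcond; apply: eq_bigr => a _.
rewrite big_split /= -rmorph_prod prodrXr coefCM coefXn eq_sym.
by case: eqP; rewrite ?mulr1 ?mulr0.
Qed.

Lemma mem_leq_sumn (s : seq nat) x : x \in s -> (x <= sumn s)%N.
Proof.
elim: s => //= y s IH; rewrite inE => /predU1P[-> | /IH]; first exact: leq_addr.
by move/leq_trans; apply; apply: leq_addl.
Qed.

Section Partitions.

Definition partition_of k n (a : {ffun 'I_k -> 'I_n}) : seq nat :=
  sort geq [seq i <- [seq val (a j) | j <- enum 'I_k] | (0 < i)%N].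

Variables (k n : nat).
Implicit Type a : {ffun 'I_k -> 'I_n}.

Lemma sumn_partition_of a : sumn (partition_of a) = (\sum_j a j)%N.
Proof.
rewrite (perm_sumn (permEl (perm_sort _ _))) sumnE big_filter big_map big_mkcond.
by rewrite big_enum; apply: eq_bigr => j _; rewrite lt0n; case: eqP.
Qed.

Lemma size_partition_of a : size (partition_of a) = (\sum_j ((a j : nat) != 0%N))%N.
Proof.
rewrite size_sort size_filter count_map -sumn_count sumnE big_map big_enum.
by apply: eq_bigr => j _; rewrite /= lt0n.
Qed.

Lemma size_partition_of_leq a : (size (partition_of a) <= k)%N.
Proof.
rewrite size_sort size_filter (leq_trans (count_size _ _)) //.
by rewrite size_map size_enum_ord.
Qed.

Lemma is_partition_of a t : is_partition (partition_of a) t = ((\sum_j a j)%N == t).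
Proof.
by rewrite /is_partition sumn_partition_of sort_sorted ?all_sort ?filter_all //.
Qed.

End Partitions.

Lemma sum_partition_tuples (R : nmodType) k t (lam : seq nat) (c : nat -> R) :
  (size lam <= k)%N ->
  \sum_(l < k.+1) \sum_(s : l.-tuple 'I_t.+1 |
                         is_partition (map val s) t && (lam == map val s)) c l
  = if is_partition lam t then c (size lam) else 0.
Proof.
move=> size_lam; case: (boolP (is_partition lam t)) => [lam_t | lam_nt]; last first.
  rewrite big1 // => l _; rewrite big_pred0 // => s.
  by apply/negbTE/andP => -[s_t /eqP lam_s]; rewrite lam_s s_t in lam_nt.
have lam_small : all (fun i => i < t.+1)%N lam.
  apply/allP => i /mem_leq_sumn; move: lam_t => /and3P[_ _ /eqP ->].
  by rewrite ltnS.
pose s0 : (size lam).-tuple 'I_t.+1 := map_tuple inord (in_tuple lam).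
have val_s0 : map val s0 = lam.
  rewrite /= -map_comp -[RHS]map_id; apply/eq_in_map => i /(allP lam_small).
  exact: inordK.
rewrite (bigD1 (Ordinal (size_lam : size lam < k.+1)%N)) //= (big_pred1 s0).
  rewrite big1 ?addr0 // => l l_neq; rewrite big_pred0 // => s.
  apply/negbTE/andP => -[_ /eqP lam_s]; move/eqP: l_neq; apply.
  by apply: val_inj; rewrite /= lam_s size_map size_tuple.
move=> s /=; apply/andP/eqP => [[_ /eqP lam_s] | ->].
  by apply/val_inj/(inj_map val_inj); rewrite val_s0.
by rewrite val_s0 lam_t eqxx.
Qed.

Section PowerSumExpansion.
Variable F : fieldType.
Implicit Types (q : F) (xs : seq F).

Definition ppoly_weight q (l : nat) : F := q ^- l * (q - q^-1) ^+ l.-1.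

Lemma mono_symE (lam : seq nat) xs t : sumn lam = t ->
  Defs.mono_sym lam xs
  = \sum_(a : {ffun 'I_(size xs) -> 'I_t.+1} | partition_of a == lam)
      \prod_(j < size xs) xs`_j ^+ a j.
Proof. by move=> <-. Qed.

Lemma ppoly_compositions q t xs :
  ppoly q t xs
  = \sum_(a : {ffun 'I_(size xs) -> 'I_t.+1} | (\sum_j a j)%N == t)
      ppoly_weight q (\sum_j ((a j : nat) != 0%N)) * \prod_(j < size xs) xs`_j ^+ a j.
Proof.
pose mon (a : {ffun 'I_(size xs) -> 'I_t.+1}) := \prod_(j < size xs) xs`_j ^+ a j.
transitivity (\sum_(l < (size xs).+1)
    \sum_(s : l.-tuple 'I_t.+1 | is_partition (map val s) t)
      \sum_(a | partition_of a == map val s) ppoly_weight q l * mon a).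
  apply: eq_bigr => l _; apply: eq_bigr => s /and3P[_ _ /eqP sum_s].
  by rewrite (mono_symE _ sum_s) mulr_sumr.
under eq_bigr do rewrite (exchange_big_dep predT) //=.
rewrite exchange_big [RHS]big_mkcond; apply: eq_bigr => a _.
under eq_bigr do rewrite -big_distrl /=.
rewrite -big_distrl /= sum_partition_tuples ?size_partition_of_leq //.
by rewrite is_partition_of size_partition_of; case: eqP; rewrite ?mul0r.
Qed.

Lemma mul_ppoly_weight q l : q != 0 -> (0 < l)%N ->
  (q - q^-1) * ppoly_weight q l = (1 - q ^- 2) ^+ l.
Proof.
move=> q_neq0; case: l => // l _.
have -> : 1 - q ^- 2 = q^-1 * (q - q^-1) by field.
by rewrite /ppoly_weight exprMn -exprVn exprS /= mulrC exprSr !mulrA.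
Qed.

Lemma ppoly_lin_ratio q t gs : q != 0 -> (0 < t)%N ->
  (q - q^-1) * ppoly q t gs
  = (\prod_(j < size gs) \poly_(m < t.+1) lin_ratio_coef (q ^- 2) gs`_j m)`_t.
Proof.
move=> q_neq0 t_gt0.
rewrite ppoly_compositions coef_prod_poly mulr_sumr; apply: eq_bigr => a /eqP sum_a.
rewrite prod_lin_ratio_coef mulrA mul_ppoly_weight // lt0n.
apply: contraTneq t_gt0 => /eqP; rewrite sum_nat_eq0 => /forallP supp0.
rewrite -sum_a -eqn0Ngt sum_nat_eq0; apply/forallP => j.
by move: (supp0 j); rewrite /=; case: (a j : nat).
Qed.

End PowerSumExpansion.

Section HighestWeight.
Variable F : fieldType.
Implicit Types (q beta : F) (gs : seq F).

Lemma ppoly_nil q t : (0 < t)%N -> ppoly q t [::] = 0.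
Proof.
move=> t_gt0; rewrite /ppoly big_ord1 big_pred0 // => s.
by rewrite (tuple0 s) /is_partition /= eq_sym; move: t_gt0; case: eqP => // ->.
Qed.

Lemma uvec_weight q beta gs : (uvec q beta gs).1 = beta * q ^+ size gs.
Proof. by case: gs => //=; rewrite mulr1. Qed.

Lemma uvec_ppoly q beta gs t : (0 < t)%N -> (uvec q beta gs).2 t = ppoly q t gs.
Proof. by case: gs => //= t_gt0; rewrite ppoly_nil. Qed.

Lemma deg_phi beta gs : beta != 0 -> (size (phi beta gs)).-1 = size gs.
Proof. by move=> beta_neq0; rewrite /phi size_scale // size_prod_XsubC. Qed.

End HighestWeight.

Theorem mainTheorem10 (R : realType) (q : R[i]) (hq0 : q != 0)
  (hq : forall n : nat, (0 < n)%N -> q ^+ n != 1)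
  (beta : R[i]) (hbeta : beta = 1 \/ beta = -1) (gs : seq R[i])
  (V : lmodType R[i]) (Xp Xm J : nat -> {linear V -> V}) (Kp Km : {linear V -> V})
  (HV : is_Uq_module q Xp Xm J Kp Km)
  (Hsimple : simple_module Xp Xm J Kp Km)
  (v0 : V) (hv0 : v0 != 0)
  (hX : forall t : nat, Xp t v0 = 0)
  (hK : Kp v0 = (uvec q beta gs).1 *: v0)
  (hJ : forall t : nat, (0 < t)%N -> J t v0 = (uvec q beta gs).2 t *: v0) :
  forall t : nat, Psi_plus q Kp J t v0 = rhs_series q beta gs t *: v0.
Proof.
have beta_neq0 : beta != 0 by case: hbeta => ->; rewrite ?oppr_eq0 oner_neq0.
case=> [|t]; rewrite /Psi_plus /rhs_series deg_phi //=.
  by rewrite hK uvec_weight /ps_mul big_ord1 /ps_inv /= coef0_phi_flat invr1 !mulr1.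
rewrite hJ // linearZ /= hK uvec_weight uvec_ppoly // !scalerA.
by rewrite phi_flat_ratio_coef -ppoly_lin_ratio // mulrC.
Qed.
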